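(* Let $N$ be a positive integer, $L>0$, and $\zeta=(\zeta_0,\dots,\zeta_{N+2})\in\mathbb{R}^{N+3}$ with $\zeta_0>\zeta_1>\dots>\zeta_{N+1}>\zeta_{N+2}=0$. With $W^\zeta$ as defined in the context, for any $y\in\mathbb{R}^{N+1}$ the minimization problem defining $W^\zeta(y)$ has an optimal solution $(\nu^*,\alpha^* )$ with $\alpha^*\in\Delta_{N+2}$ of the form \[ \alpha^*=(\underbrace{0,\dots,0}_{m},\alpha^*_m,1-\alpha^*_m,\underbrace{0,\dots,0}_{N-m}) \] for some $m\in\{0,\dots,N\}$.
   Context: Let $e_0,\dots,e_N$ denote the standard unit vectors of $\mathbb{R}^{N+1}$ (zero-based indexing). Define for $i=0,\dots,N+1$: $x_i=-\sum_{j=0}^{i-1}\frac{\zeta_j-\zeta_{i+1}}{\sqrt{\zeta_j-\zeta_{j+1}}}e_j\in\mathbb{R}^{N+1}$; $g_i=L\sqrt{\zeta_i-\zeta_{i+1}}\,e_i$ for $i=0,\dots,N$ and $g_{N+1}=0$; $f_i=\frac L2(\zeta_i+\zeta_{i+1})$ for $i=0,\dots,N$ and $f_{N+1}=0$. For $y\in\mathbb{R}^{N+1}$, $\nu\in\mathbb{R}^{N+1}$, $\alpha=(\alpha_0,\dots,\alpha_{N+1})\in\mathbb{R}^{N+2}$ let $w^\zeta(y,\nu,\alpha)=\frac L2\|y+\nu-\sum_{i=0}^{N+1}\alpha_i(x_i-\frac1Lg_i)\|^2+\sum_{i=0}^{N+1}\alpha_i(f_i-\frac1{2L}\|g_i\|^2)$,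 and $W^\zeta(y)=\min\{w^\zeta(y,\nu,\alpha):\nu\in\mathbb{R}^{N+1}_+,\ \alpha\in\Delta_{N+2}\}$, where $\mathbb{R}^{N+1}_+$ is the nonnegative orthant and $\Delta_{N+2}=\{\alpha\in\mathbb{R}^{N+2}:\alpha_i\geq0,\ \sum_i\alpha_i=1\}$ (entries indexed $0,\dots,N+1$). *)

From mathcomp Require Import all_boot all_order all_algebra.
From mathcomp Require Import reals.
Set Implicit Arguments. Unset Strict Implicit. Unset Printing Implicit Defensive.
Import Order.TTheory GRing.Theory Num.Theory.
Local Open Scope ring_scope.

Section Defs.
Variable R : realType.
Variable N : nat.
Variable L : R.
Variable zeta : nat -> R. (* only zeta 0, ..., zeta (N+2) matter *)

Definition sqnorm (v : 'I_N.+1 -> R) : R := \sum_(j < N.+1) v j ^+ 2.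

Definition xpt (i : nat) : 'I_N.+1 -> R := fun j =>
  if (j < i)%N then - ((zeta j - zeta i.+1) / Num.sqrt (zeta j - zeta j.+1))
  else 0.

Definition gpt (i : nat) : 'I_N.+1 -> R := fun j =>
  if (i <= N)%N && (nat_of_ord j == i) then L * Num.sqrt (zeta i - zeta i.+1)
  else 0.

Definition fval (i : nat) : R :=
  if (i <= N)%N then L / 2 * (zeta i + zeta i.+1) else 0.

Definition wfun (y nu : 'I_N.+1 -> R) (alpha : 'I_N.+2 -> R) : R :=
  L / 2 * sqnorm (fun j => y j + nu j
      - \sum_(i < N.+2) alpha i * (xpt i j - L^-1 * gpt i j))
  + \sum_(i < N.+2) alpha i * (fval i - (2 * L)^-1 * sqnorm (gpt i)).

Definition nonneg_orthant (nu : 'I_N.+1 -> R) : Prop := forall j, 0 <= nu j.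

Definition in_simplex (alpha : 'I_N.+2 -> R) : Prop :=
  (forall i, 0 <= alpha i) /\ \sum_(i < N.+2) alpha i = 1.

End Defs.

From mathcomp Require Import all_boot all_order all_algebra.
From mathcomp Require Import all_classical all_reals all_analysis.
From mathcomp Require Import ring lra.
Set Implicit Arguments. Unset Strict Implicit. Unset Printing Implicit Defensive.
Import Order.TTheory GRing.Theory Num.Theory.
Import numFieldNormedType.Exports.
Local Open Scope ring_scope.
Local Open Scope classical_set_scope.

(** The i-th term of u_j = sum_i alpha_i (x_i - g_i / L)_j equals
    -(zeta_j - zeta_(i+1))_+ / sqrt (zeta_j - zeta_(j+1)), and
    f_i - |g_i|^2 / (2L) = L zeta_(i+1).  Minimizing over nu >= 0 replaces each
    residual by its positive part, and by convexity of t |-> t_+ the objective is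
    then bounded below by a continuous function of the mean
    e = sum_i alpha_i zeta_(i+1) in [0, zeta_1] alone, with equality when alpha
    is supported on two consecutive indices.  A minimizer e of that function lies
    in some [zeta_(m+2), zeta_(m+1)], and its barycentric coordinates there give
    the optimal alpha. *)

Section PosPart.
Variable R : realDomainType.
Implicit Types x y t : R.

Definition pos_part x : R := Num.max x 0.

Lemma pos_part_ge0 x : 0 <= pos_part x.
Proof. by rewrite le_max lexx orbT. Qed.

Lemma ger0_pos_part x : 0 <= x -> pos_part x = x.
Proof. by move=> x0; rewrite /pos_part max_l. Qed.

Lemma ler0_pos_part x : x <= 0 -> pos_part x = 0.
Proof. by move=> x0; rewrite /pos_part max_r. Qed.

Lemma addr_pos_partN x : x + pos_part (- x) = pos_part x.
Proof.
case: (leP 0 x) => x0.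
  by rewrite ler0_pos_part ?oppr_le0 // addr0 ger0_pos_part.
by rewrite ger0_pos_part ?oppr_ge0 ?ltW // subrr ler0_pos_part ?ltW.
Qed.

Lemma pos_part_sqr_le x y : x <= y -> pos_part x ^+ 2 <= y ^+ 2.
Proof.
move=> xy; case: (leP x 0) => x0; first by rewrite ler0_pos_part // expr0n sqr_ge0.
by rewrite ger0_pos_part ?(ltW x0) //; nra.
Qed.

Lemma pos_part_sum_le (I : finType) (w a : I -> R) : (forall i, 0 <= w i) ->
  pos_part (\sum_i w i * a i) <= \sum_i w i * pos_part (a i).
Proof.
move=> w0; rewrite ge_max; apply/andP; split.
- by apply: ler_sum => i _; rewrite ler_wpM2l // le_max lexx.
- by apply: sumr_ge0 => i _; rewrite mulr_ge0 ?pos_part_ge0.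
Qed.

Lemma pos_part_convex_comb t x y : 0 <= t <= 1 ->
  (0 <= x) && (0 <= y) || (x <= 0) && (y <= 0) ->
  pos_part (t * x + (1 - t) * y) = t * pos_part x + (1 - t) * pos_part y.
Proof.
move=> /andP[t0 t1] /orP[/andP[x0 y0]|/andP[x0 y0]].
  by rewrite !ger0_pos_part // addr_ge0 // mulr_ge0 // subr_ge0.
by rewrite !ler0_pos_part ?mulr0 ?addr0 //; nra.
Qed.

Lemma weighted_sum_bounds (I : finType) (w a : I -> R) lo hi :
  (forall i, 0 <= w i) -> \sum_i w i = 1 -> (forall i, lo <= a i <= hi) ->
  lo <= \sum_i w i * a i <= hi.
Proof.
move=> w0 w1 a_itv; rewrite -[lo]mul1r -[hi]mul1r -w1 !mulr_suml.
by apply/andP; split; apply: ler_sum => i _; rewrite ler_wpM2l //; case/andP: (a_itv i).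
Qed.

Lemma exists_step_bracket (f : nat -> R) n e : f n.+1 <= e <= f 0 ->
  exists2 k, (k <= n)%N & f k.+1 <= e <= f k.
Proof.
elim: n => [|n IHn] /andP[fe ef]; first by exists 0%N; rewrite ?fe.
have [efn|fne] := leP e (f n.+1); first by exists n.+1; rewrite ?fe.
have /IHn[k kn ekf] : f n.+1 <= e <= f 0 by rewrite (ltW fne) ef.
by exists k; rewrite // ltnW.
Qed.

End PosPart.

Lemma segment_convex_coord (R : realFieldType) (a b e : R) : b < a -> b <= e <= a ->
  exists2 t, 0 <= t <= 1 & e = t * a + (1 - t) * b.
Proof.
move=> ba /andP[be ea]; have ab0 : a - b != 0 by rewrite subr_eq0 gt_eqF.
exists ((e - b) / (a - b)); last by field.
rewrite divr_ge0 ?subr_ge0 ?(ltW ba) // ler_pdivrMr ?subr_gt0 // mul1r.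
by rewrite lerD2r.
Qed.

Section TwoPoint.
Variables (R : pzRingType) (n : nat).

Definition two_point (m : nat) (t : R) : 'I_n -> R := fun i =>
  if nat_of_ord i == m then t else if nat_of_ord i == m.+1 then 1 - t else 0.

Lemma sum_two_point m t (F : nat -> R) : (m.+1 < n)%N ->
  \sum_(i < n) two_point m t i * F i = t * F m + (1 - t) * F m.+1.
Proof.
move=> mn; have m_n := ltnW mn.
rewrite (bigD1 (Ordinal m_n)) // (bigD1 (Ordinal mn)) ?neq_ltn ?ltnSn ?orbT //=.
rewrite /two_point /= eqxx (gtn_eqF (ltnSn m)) eqxx addrA big1 ?addr0 // => i /andP[im1 im].
by rewrite -!(inj_eq val_inj) /= in im im1; rewrite (negbTE im) (negbTE im1) mul0r.
Qed.

End TwoPoint.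

Lemma two_point_simplex (R : realType) (N m : nat) (t : R) :
  (m <= N)%N -> 0 <= t <= 1 -> in_simplex (two_point m t : 'I_N.+2 -> R).
Proof.
move=> mN /andP[t0 t1]; split.
  by move=> i; rewrite /two_point; repeat case: ifP => _; rewrite ?subr_ge0.
have := @sum_two_point R N.+2 m t (fun=> 1) mN.
by under eq_bigr do rewrite mulr1; rewrite !mulr1 subrKC.
Qed.

Section Continuity.
Variable R : realType.

Lemma cvg_pos_part T (F : set_system T) {FF : Filter F} (f : T -> R) (a : R) :
  f @ F --> a -> pos_part (f x) @[x --> F] --> pos_part a.
Proof.
move=> fa; apply: (@continuous_cvg _ _ _ _ _ _ (@pos_part R)) => //.
by apply: (@continuous_max _ _ id (fun _ => 0)); [exact: cvg_id|exact: cvg_cst].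
Qed.

End Continuity.

Section Wzeta.
Variables (R : realType) (N : nat) (L : R) (zeta : nat -> R).
Hypothesis L_gt0 : 0 < L.
Hypothesis zeta_decr : forall i : nat, (i <= N.+1)%N -> zeta i.+1 < zeta i.
Hypothesis zeta_last : zeta N.+2 = 0.

Lemma zeta_le i j : (i <= j <= N.+2)%N -> zeta j <= zeta i.
Proof.
case/andP=> + jN; elim: j jN => [|j IHj] jN; first by rewrite leqn0 => /eqP->.
rewrite leq_eqVlt => /orP[/eqP->//|ij].
exact: le_trans (ltW (zeta_decr jN)) (IHj (ltnW jN) ij).
Qed.

Definition sqrt_step j := Num.sqrt (zeta j - zeta j.+1).

Lemma sqrt_step_gt0 j : (j <= N.+1)%N -> 0 < sqrt_step j.
Proof. by move=> jN; rewrite sqrtr_gt0 subr_gt0 zeta_decr. Qed.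

Lemma sqr_sqrt_step j : (j <= N.+1)%N -> sqrt_step j ^+ 2 = zeta j - zeta j.+1.
Proof. by move=> jN; rewrite sqr_sqrtr // subr_ge0 ltW // zeta_decr. Qed.

Definition excess (alpha : 'I_N.+2 -> R) (j : nat) : R :=
  \sum_(i < N.+2) alpha i * pos_part (zeta j - zeta i.+1).

Lemma xpt_sub_gpt (i : 'I_N.+2) (j : 'I_N.+1) :
  xpt zeta i j - L^-1 * gpt L zeta i j = - (pos_part (zeta j - zeta i.+1) / sqrt_step j).
Proof.
have jN : (j <= N.+1)%N by rewrite ltnW.
have s_neq0 : sqrt_step j != 0 by rewrite gt_eqF ?sqrt_step_gt0.
rewrite /xpt /gpt; case: (ltngtP j i) => [ji|ij|ij].
- by rewrite andbF mulr0 subr0 ger0_pos_part // subr_ge0 zeta_le // (leqW (ltnW ji)) /=.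
- by rewrite andbF mulr0 subr0 ler0_pos_part ?mul0r ?oppr0 // subr_le0 zeta_le // ij ltnW.
- rewrite andbT -ij -ltnS ltn_ord sub0r ger0_pos_part ?subr_ge0 ?ltW ?zeta_decr //.
  by rewrite mulKf ?gt_eqF // -/(sqrt_step j) -(sqr_sqrt_step jN) expr2 mulfK.
Qed.

Lemma fval_sub_sqnorm_gpt (i : 'I_N.+2) :
  fval N L zeta i - (2 * L)^-1 * sqnorm (@gpt R N L zeta i) = L * zeta i.+1.
Proof.
rewrite /fval /sqnorm /gpt; case: (leqP i N) => iN.
  rewrite (bigD1 (Ordinal (iN : (i < N.+1)%N))) //= eqxx big1 => [|k]; last first.
    by rewrite -(inj_eq val_inj) => /negbTE /= ->; rewrite expr0n.
  by rewrite addr0 exprMn -/(sqrt_step i) sqr_sqrt_step ?(leqW iN) //; field; rewrite gt_eqF.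
have -> : nat_of_ord i = N.+1 by apply/eqP; rewrite eqn_leq iN -ltnS ltn_ord.
by rewrite zeta_last big1 ?mulr0 ?subr0 // => k _; rewrite expr0n.
Qed.

Lemma sum_xpt_sub_gpt alpha (j : 'I_N.+1) :
  \sum_(i < N.+2) alpha i * (xpt zeta i j - L^-1 * gpt L zeta i j)
  = - (excess alpha j / sqrt_step j).
Proof.
rewrite /excess mulr_suml -sumrN; apply: eq_bigr => i _.
by rewrite xpt_sub_gpt mulrN mulrA.
Qed.

Lemma wfunE y nu alpha : wfun L zeta y nu alpha =
  L / 2 * \sum_(j < N.+1) (y j + nu j + excess alpha j / sqrt_step j) ^+ 2
  + L * \sum_(i < N.+2) alpha i * zeta i.+1.
Proof.
rewrite /wfun; congr (_ * _ + _).
  by apply: eq_bigr => j _; rewrite sum_xpt_sub_gpt opprK.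
by rewrite mulr_sumr; apply: eq_bigr => i _; rewrite fval_sub_sqnorm_gpt mulrCA.
Qed.

Lemma excess_ge alpha (j : nat) : in_simplex alpha ->
  pos_part (zeta j - \sum_(i < N.+2) alpha i * zeta i.+1) <= excess alpha j.
Proof.
case=> alpha_ge0 alpha_sum1.
rewrite -[zeta j]mul1r -alpha_sum1 mulr_suml -sumrB.
under eq_bigr do rewrite -mulrBr.
exact: pos_part_sum_le.
Qed.

Lemma excess_two_point m t (j : nat) : (m <= N)%N -> 0 <= t <= 1 -> (j <= N.+2)%N ->
  excess (two_point m t) j = pos_part (zeta j - (t * zeta m.+1 + (1 - t) * zeta m.+2)).
Proof.
move=> mN t01 jN; rewrite /excess (@sum_two_point _ _ m t (fun i => pos_part (zeta j - zeta i.+1))) //.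
have -> : zeta j - (t * zeta m.+1 + (1 - t) * zeta m.+2)
          = t * (zeta j - zeta m.+1) + (1 - t) * (zeta j - zeta m.+2) by ring.
(* no zeta_k lies strictly between zeta_(m+2) and zeta_(m+1) *)
rewrite pos_part_convex_comb // !subr_ge0 !subr_le0.
have m2N : (m.+2 <= N.+2)%N by rewrite !ltnS.
apply/orP; have [jm|mj] := leqP j m.+1; [left|right].
  by rewrite !zeta_le // ?(leqW jm) ?jm ?m2N ?(ltnW m2N).
by rewrite !zeta_le // ?jN ?mj ?(ltnW mj).
Qed.

Lemma mean_zeta_bounds alpha : in_simplex alpha ->
  0 <= \sum_(i < N.+2) alpha i * zeta i.+1 <= zeta 1.
Proof.
case=> alpha_ge0 alpha_sum1; apply: weighted_sum_bounds => // i.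
by rewrite -zeta_last !zeta_le // ?ltn_ord ?leqnn.
Qed.

Variable y : 'I_N.+1 -> R.

Definition wprofile (e : R) : R :=
  L / 2 * \sum_(j < N.+1) pos_part (y j + pos_part (zeta j - e) / sqrt_step j) ^+ 2 + L * e.

Lemma wprofile_continuous : continuous wprofile.
Proof.
move=> e; apply: cvgD; apply: cvgM; try exact: cvg_cst; last exact: cvg_id.
apply: cvg_big => [|j _]; first exact: add_continuous.
apply: (@continuous_cvg _ _ _ _ _ _ (fun x : R => x ^+ 2)); first exact: exprn_continuous.
apply: cvg_pos_part; apply: cvgD; first exact: cvg_cst.
apply: cvgM; last exact: cvg_cst.
by apply: cvg_pos_part; apply: cvgB; [exact: cvg_cst|exact: cvg_id].
Qed.

Lemma wprofile_le_wfun nu alpha : nonneg_orthant nu -> in_simplex alpha ->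
  wprofile (\sum_(i < N.+2) alpha i * zeta i.+1) <= wfun L zeta y nu alpha.
Proof.
move=> nu_ge0 alpha_simplex; rewrite wfunE lerD2r ler_wpM2l ?divr_ge0 ?(ltW L_gt0) //.
apply: ler_sum => j _; apply: pos_part_sqr_le; rewrite -addrA lerD2l.
apply: (@le_trans _ _ (excess alpha j / sqrt_step j)); last by rewrite lerDr nu_ge0.
by rewrite ler_wpM2r ?excess_ge // invr_ge0 ltW // sqrt_step_gt0 // ltnW.
Qed.

Definition nu_opt (alpha : 'I_N.+2 -> R) (j : 'I_N.+1) : R :=
  pos_part (- (y j + excess alpha j / sqrt_step j)).

Lemma wfun_two_point m t : (m <= N)%N -> 0 <= t <= 1 ->
  wfun L zeta y (nu_opt (two_point m t)) (two_point m t)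
  = wprofile (t * zeta m.+1 + (1 - t) * zeta m.+2).
Proof.
move=> mN t01; rewrite wfunE /wprofile (@sum_two_point _ _ m t (fun i => zeta i.+1)) //.
congr (_ * _ + _); apply: eq_bigr => j _.
by rewrite addrAC /nu_opt addr_pos_partN excess_two_point // (leqW (ltnW (ltn_ord j))).
Qed.

End Wzeta.

Theorem lemma2 (R : realType) (N : nat) (L : R) (zeta : nat -> R)
  (hN : (0 < N)%N) (hL : 0 < L)
  (hzeta : forall i : nat, (i <= N.+1)%N -> zeta i.+1 < zeta i)
  (hzero : zeta N.+2 = 0)
  (y : 'I_N.+1 -> R) :
  exists (nu : 'I_N.+1 -> R) (alpha : 'I_N.+2 -> R),
    [/\ nonneg_orthant nu, in_simplex alpha,
        (forall (nu' : 'I_N.+1 -> R) (alpha' : 'I_N.+2 -> R),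
            nonneg_orthant nu' -> in_simplex alpha' ->
            wfun L zeta y nu alpha <= wfun L zeta y nu' alpha') &
        exists2 m : nat, (m <= N)%N &
          exists a : R, forall i : 'I_N.+2,
            alpha i = if nat_of_ord i == m then a
                      else if nat_of_ord i == m.+1 then 1 - a
                      else 0].
Proof.
have zeta1_ge0 : 0 <= zeta 1 by rewrite -hzero (zeta_le hzeta) // leqnn.
have [e] := EVT_min zeta1_ge0 (continuous_subspaceT (@wprofile_continuous _ _ L zeta y)).
rewrite in_itv /= => /andP[e_ge0 e_le] e_min.
have [m mN e_in_step] : exists2 m, (m <= N)%N & zeta m.+2 <= e <= zeta m.+1.
  by apply: (@exists_step_bracket _ (fun i => zeta i.+1) N); rewrite hzero e_ge0.
have [t t01 e_eq] := segment_convex_coord (hzeta m.+1 mN) e_in_step.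
exists (nu_opt zeta y (two_point m t)), (two_point m t); split.
- by move=> j; exact: pos_part_ge0.
- exact: two_point_simplex.
- move=> nu alpha nu_ge0 alpha_simplex.
  rewrite (wfun_two_point hL hzeta hzero) // -e_eq.
  apply: le_trans (wprofile_le_wfun hL hzeta hzero y nu_ge0 alpha_simplex).
  by apply: e_min; rewrite in_itv /= mean_zeta_bounds.
- by exists m => //; exists t.
Qed.
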